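(* Let $(\Sigma,E)$ be an algebraic theory and let $(T,\eta,\mu)=(T_{\Sigma,E},\eta_{\Sigma,E},\mu_{\Sigma,E})$ be its free monad on $\mathbf{Set}$. Then the algebraic theory $(\Sigma^{\mathrm{s}},E^{\mathrm{s}})$ is an algebraic presentation of the semifree monad $(T^{\mathrm{s}},\eta^{\mathrm{s}},\mu^{\mathrm{s}})$ on $T$, i.e. the monad $T_{\Sigma^{\mathrm{s}},E^{\mathrm{s}}}$ is isomorphic (as a monad) to $T^{\mathrm{s}}$.
   Context: An algebraic signature $\Sigma$ is a set of operation symbols, each with an arity $n\in\mathbb{N}$ (written $(\mathsf{op}:n)$). $\mathrm{Var}=\{v_1,v_2,\dots\}$ is a fixed set of variables; an equation is a pair of $\Sigma$-terms over $\mathrm{Var}$; an algebraic theory $(\Sigma,E)$ is a signature with a set $E$ of equations. The free monad $T_{\Sigma,E}$ of $(\Sigma,E)$ sends a set $X$ to the set of $\Sigma$-terms over $X$ modulo the smallest congruence containing all substitution instances of equations of $E$; its unit sends $x$ to the class $\overline{x}$, and its multiplication flattens terms: $\overline{t[\overline{t_i}/v_i]}\mapsto\overline{t[t_i/v_i]}$. An algebraic theory $(\Sigma',E')$ is an algebraic presentation of a $\mathbf{Set}$-monad $M$ if $T_{\Sigma',E'}\cong M$ as monads. For a monad $(M,\eta,\mu)$ on a category with finite coproducts, the semifree monad is $M^{\mathrm{s}}=\mathrm{Id}+M$ with unit $\eta^{\mathrm{s}}=\mathrm{inl}$ and multiplication $\mu^{\mathrm{s}}=[\mathrm{id}_{\mathrm{Id}+M},\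 \mathrm{inr}\circ\mu\circ M[\eta,\mathrm{id}_M]]$. Given $(\Sigma,E)$, the theory $(\Sigma^{\mathrm{s}},E^{\mathrm{s}})$ has signature $\Sigma^{\mathrm{s}}=\Sigma\uplus\{\mathsf{a}:1\}$ and equations $E^{\mathrm{s}}$ consisting of: $\mathsf{a}\mathsf{a}v_1=\mathsf{a}v_1$; $\mathsf{a}(\mathsf{op}(v_1,\dots,v_n))=\mathsf{op}(v_1,\dots,v_n)$ and $\mathsf{op}(\mathsf{a}v_1,\dots,\mathsf{a}v_n)=\mathsf{op}(v_1,\dots,v_n)$ for every $(\mathsf{op}:n)\in\Sigma$; and $t(\mathsf{a}v_1,\dots,\mathsf{a}v_n)=s(\mathsf{a}v_1,\dots,\mathsf{a}v_n)$ for every equation $t(v_1,\dots,v_n)=s(v_1,\dots,v_n)$ in $E$. *)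

From mathcomp Require Import ssreflect ssrfun ssrbool eqtype ssrnat fintype.
From Stdlib Require Import ClassicalEpsilon.

Set Implicit Arguments.
Unset Strict Implicit.
Unset Printing Implicit Defensive.

Record setMonad := SetMonad {
  mF :> Type -> Type;
  mmap : forall X Y : Type, (X -> Y) -> mF X -> mF Y;
  mret : forall X : Type, X -> mF X;
  mjoin : forall X : Type, mF (mF X) -> mF X }.
Arguments mmap s {X Y} _ _.
Arguments mret s {X} _.
Arguments mjoin s {X} _.

Definition monad_iso (M N : setMonad) : Prop :=
  exists alpha : forall X : Type, M X -> N X,
    [/\ (forall X, bijective (alpha X)),
        (forall X Y (f : X -> Y) (m : M X),
            alpha Y (mmap M f m) = mmap N f (alpha X m)),
        (forall X (x : X), alpha X (mret M x) = mret N x) &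
        (forall X (m : M (M X)),
            alpha X (mjoin M m) = mjoin N (alpha (N X) (mmap M (alpha X) m)))].

Definition semifree (M : setMonad) : setMonad :=
  @SetMonad (fun X => (X + M X)%type)
    (fun X Y f s => match s with
                    | inl x => inl (f x)
                    | inr m => inr (mmap M f m) end)
    (fun X x => inl x)
    (fun X s => match s with
                | inl y => y
                | inr m => inr (mjoin M (mmap M
                             (fun y => match y with
                                       | inl x => mret M x
                                       | inr n => n end) m)) end).

Section Syntax.
Variables (O : Type) (ar : O -> nat).

Inductive term (X : Type) : Type :=
| Var of X
| Op (o : O) of ('I_(ar o) -> term X).
Arguments Var {X} _.
Arguments Op {X} o _.

Fixpoint bind (X Y : Type) (t : term X) (s : X -> term Y) : term Y :=
  match t with
  | Var x => s x
  | Op o a => Op o (fun i => bind (a i) s)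
  end.

Definition tmap (X Y : Type) (f : X -> Y) (t : term X) : term Y :=
  bind t (fun x => Var (f x)).

(** Equations are pairs of terms over the variables Var = nat (v_{i+1} ~ i). *)
Variable E : term nat -> term nat -> Prop.

Inductive eqv (X : Type) : term X -> term X -> Prop :=
| eqv_ax (l r : term nat) (s : nat -> term X) :
    E l r -> eqv (bind l s) (bind r s)
| eqv_refl t : eqv t t
| eqv_sym t u : eqv t u -> eqv u t
| eqv_trans t u w : eqv t u -> eqv u w -> eqv t w
| eqv_cong (o : O) (a b : 'I_(ar o) -> term X) :
    (forall i, eqv (a i) (b i)) -> eqv (Op o a) (Op o b).

Definition quot (X : Type) : Type :=
  {P : term X -> Prop | exists t : term X, P = eqv t}.

Definition cls (X : Type) (t : term X) : quot X :=
  exist (fun P => exists u, P = eqv u) (eqv t) (ex_intro _ t erefl).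

Definition repr (X : Type) (c : quot X) : term X :=
  proj1_sig (constructive_indefinite_description _ (proj2_sig c)).

Definition free_monad : setMonad :=
  @SetMonad quot
    (fun X Y f c => cls (tmap f (repr c)))
    (fun X x => cls (Var x))
    (fun X c => cls (bind (repr c) (fun q => repr q))).

End Syntax.
Arguments Var {O} ar {X} _.
Arguments Op {O ar X} o _.

Section Semi.
Variables (O : Type) (ar : O -> nat).

(** Sigma^s = Sigma + {a : 1}; None is the new unary symbol a. *)
Definition sar (o : option O) : nat :=
  match o with Some o => ar o | None => 1 end.

Definition sA (X : Type) (u : term sar X) : term sar X :=
  Op (None : option O) (fun _ => u).

Fixpoint embedA (t : term ar nat) : term sar nat :=
  match t with
  | Var v => sA (Var sar v)
  | Op o a => Op (Some o) (fun i => embedA (a i))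
  end.

Variable E : term ar nat -> term ar nat -> Prop.

Inductive semi_eqs : term sar nat -> term sar nat -> Prop :=
| se_aa : semi_eqs (sA (sA (Var sar 0))) (sA (Var sar 0))
| se_aop (o : O) :
    semi_eqs (sA (Op (Some o) (fun i => Var sar (nat_of_ord i))))
             (Op (Some o) (fun i => Var sar (nat_of_ord i)))
| se_opa (o : O) :
    semi_eqs (Op (Some o) (fun i => sA (Var sar (nat_of_ord i))))
             (Op (Some o) (fun i => Var sar (nat_of_ord i)))
| se_E (t s : term ar nat) : E t s -> semi_eqs (embedA t) (embedA s).

End Semi.

(* Every Sigma^s-term u is either a variable or E^s-equivalent to its normal
   form: erase all occurrences of a and put one a in front of each variable.
   Indeed the equations a a v = a v, a op(v) = op(v) and op(a v) = op(v) push
   the a's down to the variables, and the E-instances of E^s relate exactly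
   such normal forms.  Conversely, erasing the a's maps E^s-equivalence into
   E-equivalence and no equation of E^s relates a variable to anything else.
   Hence T^s X ~= X + T X, sending the variable x to inl x and any other
   class to inr [erase u]; naturality and the unit law are immediate, and
   the multiplication law follows from erasure commuting with substitution. *)
From Stdlib Require Import ClassicalEpsilon FunctionalExtensionality.
From Stdlib Require Import PropExtensionality ProofIrrelevance.
From mathcomp Require Import ssreflect ssrfun ssrbool eqtype ssrnat fintype.

Set Implicit Arguments.
Unset Strict Implicit.
Unset Printing Implicit Defensive.

Section FreeMonad.
Variables (O : Type) (ar : O -> nat) (E : term ar nat -> term ar nat -> Prop).

Lemma bindA X Y Z (t : term ar X) (s : X -> term ar Y) (s' : Y -> term ar Z) :
  bind (bind t s) s' = bind t (fun x => bind (s x) s').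
Proof.
elim: t => [x|o a IH] //=; congr Op; apply: functional_extensionality => i.
exact: IH.
Qed.

Lemma eqv_bindl X Y (t u : term ar X) (s : X -> term ar Y) :
  eqv E t u -> eqv E (bind t s) (bind u s).
Proof.
elim=> {t u} [l r s' El|t|t u _ IH|t u w _ IHtu _ IHuw|o a b _ IH].
- rewrite !bindA; exact: eqv_ax.
- exact: eqv_refl.
- exact: eqv_sym.
- exact: eqv_trans IHuw.
- exact: eqv_cong.
Qed.

Lemma eqv_bindr X Y (t : term ar X) (s s' : X -> term ar Y) :
  (forall x, eqv E (s x) (s' x)) -> eqv E (bind t s) (bind t s').
Proof. by move=> ss'; elim: t => [x|o a IH] //=; apply: eqv_cong. Qed.

Lemma quot_ext X (c d : quot E X) : proj1_sig c = proj1_sig d -> c = d.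
Proof.
by case: c d => [P ePt] [Q eQu] /= PQ; subst Q; congr exist; apply: proof_irrelevance.
Qed.

Lemma cls_eq X (t u : term ar X) : eqv E t u -> cls E t = cls E u.
Proof.
move=> tu; apply: quot_ext => /=.
apply: functional_extensionality => w; apply: propositional_extensionality.
split; [exact: eqv_trans (eqv_sym tu)|exact: eqv_trans tu].
Qed.

Lemma cls_inj X (t u : term ar X) : cls E t = cls E u -> eqv E t u.
Proof. by move=> /(f_equal (@proj1_sig _ _)) /= ->; apply: eqv_refl. Qed.

Lemma cls_repr X (c : quot E X) : cls E (repr c) = c.
Proof.
apply: quot_ext; rewrite /repr /=.
by case: (constructive_indefinite_description _ _) => t /= ->.
Qed.

Lemma repr_cls X (t : term ar X) : eqv E (repr (cls E t)) t.
Proof. by apply: cls_inj; rewrite cls_repr. Qed.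

End FreeMonad.

Section SemifreeTheory.
Variables (O : Type) (ar : O -> nat) (E : term ar nat -> term ar nat -> Prop).
Notation sr := (sar ar).
Notation Es := (@semi_eqs O ar E).

Fixpoint erase X (u : term sr X) : term ar X :=
  match u with
  | Var x => Var ar x
  | Op o a =>
    match o as o' return ('I_(sr o') -> term sr X) -> term ar X with
    | Some o => fun a => Op o (fun i => erase (a i))
    | None => fun a => erase (a ord0)
    end a
  end.

Fixpoint embA X (t : term ar X) : term sr X :=
  match t with
  | Var x => sA (Var sr x)
  | Op o a => Op (Some o : option O) (fun i => embA (a i))
  end.

Definition var_of X (u : term sr X) : option X :=
  if u is Var x then Some x else None.

Lemma var_ofP X (u : term sr X) x : var_of u = Some x -> u = Var sr x.
Proof. by case: u => //= y [->]. Qed.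

Lemma var_of_bind X Y (u : term sr X) (s : X -> term sr Y) :
  var_of u = None -> var_of (bind u s) = None.
Proof. by case: u. Qed.

Lemma var_of_embA X (t : term ar X) : var_of (embA t) = None.
Proof. by case: t. Qed.

Lemma embedAE (t : term ar nat) : embedA t = embA t.
Proof.
elim: t => [v|o a IH] //=; congr Op; apply: functional_extensionality => i.
exact: IH.
Qed.

Lemma erase_embA X (t : term ar X) : erase (embA t) = t.
Proof.
elim: t => [x|o a IH] //=; congr Op; apply: functional_extensionality => i.
exact: IH.
Qed.

Lemma erase_bind X Y (u : term sr X) (s : X -> term sr Y) :
  erase (bind u s) = bind (erase u) (fun x => erase (s x)).
Proof.
elim: u => [x|[o|] a IH] //=; congr Op; apply: functional_extensionality => i.
exact: IH.
Qed.

Lemma eqv_erase X (u v : term sr X) : eqv Es u v -> eqv E (erase u) (erase v).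
Proof.
elim=> {u v} [l r s Elr|t|t u _ IH|t u w _ IHtu _ IHuw|[o|] a b _ IH].
- rewrite !erase_bind; case: Elr => [|o|o|t u Etu] /=; try exact: eqv_refl.
  rewrite !embedAE !erase_embA; exact: eqv_ax.
- exact: eqv_refl.
- exact: eqv_sym.
- exact: eqv_trans IHuw.
- exact: eqv_cong.
- exact: IH.
Qed.

Lemma eqv_var_of X (u v : term sr X) : eqv Es u v -> var_of u = var_of v.
Proof.
elim=> {u v} [l r s Elr|t|t u _ IH|t u w _ IHtu _ IHuw|o a b _ IH] //.
- by case: Elr => [|o|o|t u _] //=; case: t; case: u.
- by rewrite IHtu.
Qed.

(* Substitutes c i for the variable v_i of an equation of arity n. *)
Definition family_subst X n (c : 'I_n -> term sr X) (d : term sr X) (v : nat) :=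
  if insub v is Some i then c i else d.

Lemma family_substE X n (c : 'I_n -> term sr X) d (i : 'I_n) :
  family_subst c d i = c i.
Proof. by rewrite /family_subst valK. Qed.

Lemma family_substK X n (c : 'I_n -> term sr X) d :
  (fun i : 'I_n => family_subst c d i) = c.
Proof. by apply: functional_extensionality => i; rewrite family_substE. Qed.

Lemma eqv_sA_embA X (t : term ar X) : eqv Es (sA (embA t)) (embA t).
Proof.
case: t => [x|o a] /=.
  exact: eqv_ax (fun=> Var sr x) (se_aa E).
have := eqv_ax (family_subst (fun i => embA (a i)) (embA (Op o a))) (se_aop E o).
by rewrite /= family_substK.
Qed.

Lemma eqv_Op_sA X o (c : 'I_(ar o) -> term sr X) :
  eqv Es (Op (Some o : option O) (fun i => sA (c i))) (Op (Some o : option O) c).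
Proof.
have := eqv_ax (family_subst c (Op (Some o : option O) c)) (se_opa E o).
rewrite /= family_substK; congr (eqv _ (Op _ _) _).
by apply: functional_extensionality => i; rewrite family_substE.
Qed.

Lemma eqv_embA_bind X (l : term ar nat) (s : nat -> term ar X) :
  eqv Es (bind (embA l) (fun v => embA (s v))) (embA (bind l s)).
Proof.
elim: l => [v|o a IH] /=; first exact: eqv_sA_embA.
exact: (eqv_cong (o := Some o)).
Qed.

Lemma eqv_embA X (t u : term ar X) : eqv E t u -> eqv Es (embA t) (embA u).
Proof.
elim=> {t u} [l r s Elr|t|t u _ IH|t u w _ IHtu _ IHuw|o a b _ IH].
- apply: eqv_trans (eqv_sym (eqv_embA_bind l s)) _.
  apply: eqv_trans (eqv_embA_bind r s); rewrite -!embedAE.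
  exact: eqv_ax (se_E Elr).
- exact: eqv_refl.
- exact: eqv_sym.
- exact: eqv_trans IHuw.
- exact: (eqv_cong (o := Some o)).
Qed.

Definition nf X (u : term sr X) : term sr X :=
  if var_of u is Some x then Var sr x else embA (erase u).

Lemma eqv_nf X (u : term sr X) :
  eqv Es u (nf u) /\ eqv Es (sA u) (embA (erase u)).
Proof.
rewrite /nf; elim: u => [x|[o|] a IH] /=; first by split; apply: eqv_refl.
- have nf_a : eqv Es (Op (Some o : option O) a) (embA (erase (Op (Some o) a))).
    apply: eqv_trans (eqv_sym (eqv_Op_sA a)) _.
    by apply: (eqv_cong (o := Some o)) => i; case: (IH i).
  split=> //.
  exact: eqv_trans (eqv_cong (o := None) (fun=> nf_a)) (eqv_sA_embA _).
- have ea : a = fun=> a ord0.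
    by apply: functional_extensionality => i; rewrite (ord1 i).
  have nf_a : eqv Es (Op (None : option O) a) (embA (erase (a ord0))).
    by rewrite ea; case: (IH ord0).
  split=> //.
  exact: eqv_trans (eqv_cong (o := None) (fun=> nf_a)) (eqv_sA_embA _).
Qed.

End SemifreeTheory.

Section Isomorphism.
Variables (O : Type) (ar : O -> nat) (E : term ar nat -> term ar nat -> Prop).
Notation sr := (sar ar).
Notation Es := (@semi_eqs O ar E).
Notation Ts := (free_monad Es).
Notation T := (free_monad E).

Definition term_to_semifree X (u : term sr X) : semifree T X :=
  if var_of u is Some x then inl x else inr (cls E (erase u)).

Definition to_semifree X (c : Ts X) : semifree T X := term_to_semifree (repr c).

Definition of_semifree X (s : semifree T X) : Ts X :=
  match s with
  | inl x => cls Es (Var sr x)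
  | inr c => cls Es (embA (repr c))
  end.

Lemma to_semifree_cls X (u : term sr X) :
  to_semifree (cls Es u) = term_to_semifree u.
Proof.
rewrite /to_semifree /term_to_semifree.
have uu := repr_cls Es u; rewrite (eqv_var_of uu).
by case: (var_of u) => //; rewrite (cls_eq (eqv_erase uu)).
Qed.

Lemma of_term_to_semifree X (u : term sr X) :
  of_semifree (term_to_semifree u) = cls Es (nf u).
Proof.
rewrite /term_to_semifree /nf; case: (var_of u) => //=.
exact/cls_eq/eqv_embA/repr_cls.
Qed.

Lemma to_semifreeK X : cancel (@to_semifree X) (@of_semifree X).
Proof.
move=> c; rewrite -[RHS]cls_repr /to_semifree of_term_to_semifree.
by apply/cls_eq/eqv_sym; case: (eqv_nf E (repr c)).
Qed.

Lemma of_semifreeK X : cancel (@of_semifree X) (@to_semifree X).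
Proof.
case=> [x|c]; rewrite /= to_semifree_cls //.
by rewrite /term_to_semifree var_of_embA erase_embA cls_repr.
Qed.

Lemma to_semifree_map X Y (f : X -> Y) (c : Ts X) :
  to_semifree (mmap Ts f c) = mmap (semifree T) f (to_semifree c).
Proof.
rewrite /= to_semifree_cls /to_semifree /term_to_semifree.
case uc: (var_of (repr c)) => [x|] /=; first by rewrite (var_ofP uc).
rewrite /tmap var_of_bind // erase_bind; congr inr; apply: cls_eq.
exact/eqv_bindl/eqv_sym/repr_cls.
Qed.

Lemma to_semifree_ret X (x : X) : to_semifree (mret Ts x) = mret (semifree T) x.
Proof. exact: to_semifree_cls. Qed.

Lemma repr_to_semifree X (c : Ts X) :
  eqv E (repr (match to_semifree c with inl x => mret T x | inr d => d end))
        (erase (repr c)).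
Proof.
rewrite /to_semifree /term_to_semifree.
case ux: (var_of (repr c)) => [x|] /=; [rewrite (var_ofP ux)|]; exact: repr_cls.
Qed.

Lemma to_semifree_join X (m : Ts (Ts X)) :
  to_semifree (mjoin Ts m) =
  mjoin (semifree T) (to_semifree (mmap Ts (@to_semifree X) m)).
Proof.
rewrite /= !to_semifree_cls /term_to_semifree.
case um: (var_of (repr m)) => [c|]; first by rewrite (var_ofP um).
rewrite /tmap !var_of_bind // !erase_bind /=; congr inr; apply: cls_eq.
apply/eqv_sym; apply: eqv_trans (eqv_bindl _ (repr_cls _ _)) _.
apply: eqv_trans (eqv_bindl _ (eqv_bindl _ (repr_cls _ _))) _.
rewrite !bindA /=; apply: eqv_bindr => c.
exact: repr_to_semifree.
Qed.

End Isomorphism.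

Theorem theorem1 (O : Type) (ar : O -> nat)
  (E : term ar nat -> term ar nat -> Prop) :
  monad_iso (free_monad (@semi_eqs O ar E)) (semifree (free_monad E)).
Proof.
exists (@to_semifree O ar E); split.
- by move=> X; exists (@of_semifree O ar E X);
    [exact: to_semifreeK|exact: of_semifreeK].
- exact: to_semifree_map.
- exact: to_semifree_ret.
- exact: to_semifree_join.
Qed.
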